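(* Let $p$ be an odd prime and $G$ a finite $p$-group. Then $G$ is a $2$-closed group if and only if $G$ is cyclic.
   Context: Permutations act on the right. For $X\leq{\rm Sym}(\Omega)$, the $2$-closure of $X$ on $\Omega$ is $X^{(2),\Omega}=\{\theta\in{\rm Sym}(\Omega)\mid \forall \alpha,\beta\in\Omega\ \exists g\in X:\ \alpha^\theta=\alpha^g,\ \beta^\theta=\beta^g\}$. An abstract group $G$ is called a $2$-closed group if $H=H^{(2),\Omega}$ for every set $\Omega$ and every subgroup $H\leq{\rm Sym}(\Omega)$ with $H\cong G$. *)

From mathcomp Require Import all_boot all_fingroup all_solvable.
Set Implicit Arguments. Unset Strict Implicit. Unset Printing Implicit Defensive.
Import GroupScope.
Local Open Scope group_scope.

(* Permutations of a finite type act on the right: x^s is (s x), and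
   (s * t) x = t (s x) in mathcomp. *)
Definition two_closure (Omega : finType) (X : {set {perm Omega}})
  : {set {perm Omega}} :=
  [set th : {perm Omega} | [forall a : Omega, forall b : Omega,
      [exists g in X, (th a == g a) && (th b == g b)]]].

Definition two_closed (gT : finGroupType) (G : {set gT}) : Prop :=
  forall (Omega : finType) (H : {group {perm Omega}}),
    H \isog G -> two_closure H = H.

From mathcomp Require Import all_boot all_fingroup all_solvable.
Set Implicit Arguments. Unset Strict Implicit. Unset Printing Implicit Defensive.
Import GroupScope.
Local Open Scope group_scope.

(* A permutation group with a point a of trivial stabiliser is 2-closed: an
   element of the 2-closure agrees with some g at a, and for every b with some
   h at both a and b; then h g^-1 fixes a, so h = g.  A faithful cyclic p-group
   has such a point, as every nontrivial stabiliser contains its unique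
   subgroup of order p.
   Conversely, for p odd a noncyclic p-group G has a normal elementary abelian
   subgroup E of order p^2, containing a normal N of order p and two subgroups
   K1, K2 of order p with N K1 = N K2 = E and K1 :&: K2 = 1.  G acts faithfully
   on the right cosets of N, K1 and K2.  Pick u in E \ N; the permutation acting
   as u on the cosets of N and fixing the other cosets lies in the 2-closure,
   because u lies in N K_i^y = E for every y, but not in G, since it fixes K1
   and K2 but moves N. *)

Section TwoClosure.

Variables (Omega : finType) (H : {group {perm Omega}}).

Lemma two_closureP (th : {perm Omega}) :
  reflect (forall a b, exists2 g, g \in H & th a = g a /\ th b = g b)
          (th \in two_closure H).
Proof.
rewrite inE; apply: (iffP forallP) => [cl a b | cl a].
  have /forallP/(_ b)/existsP[g /andP[Hg /andP[/eqP-> /eqP->]]] := cl a.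
  by exists g.
apply/forallP=> b; have [g Hg [-> ->]] := cl a b.
by apply/existsP; exists g; rewrite Hg !eqxx.
Qed.

Lemma sub_two_closure : H \subset two_closure H.
Proof. by apply/subsetP=> th Hth; apply/two_closureP=> a b; exists th. Qed.

Lemma two_closure_trivg : H :=: 1 -> two_closure H = H.
Proof.
move=> H1; apply/eqP; rewrite eqEsubset sub_two_closure andbT.
apply/subsetP=> th /two_closureP cl; rewrite H1 inE; apply/eqP/permP=> a.
by have [g] := cl a a; rewrite H1 => /set1P-> [-> _].
Qed.

Lemma two_closure_regular_point (a : Omega) :
  'C_H[a | 'P] = 1 -> two_closure H = H.
Proof.
move=> regHa; apply/eqP; rewrite eqEsubset sub_two_closure andbT.
apply/subsetP=> th /two_closureP cl; have [g0 Hg0 [th_a _]] := cl a a.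
suff -> : th = g0 by [].
apply/permP=> b; have [g Hg [g_a ->]] := cl a b.
suff g_Ca : g * g0^-1 \in 'C_H[a | 'P].
  by move: g_Ca; rewrite regHa => /set1P/eqP; rewrite -eq_mulgV1 => /eqP->.
rewrite inE groupM ?groupV //=; apply/astab1P.
by rewrite /= /aperm permM -g_a th_a -permM mulgV perm1.
Qed.

End TwoClosure.

Lemma cyclic_pgroup_regular_point (p : nat) (Omega : finType)
    (H : {group {perm Omega}}) :
  p.-group H -> cyclic H -> H :!=: 1 -> exists a, 'C_H[a | 'P] = 1.
Proof.
move=> pH cycH ntH; have oH1 := Ohm1_cyclic_pgroup_prime cycH pH ntH.
suff /existsP[a /eqP regHa] : [exists a, 'C_H[a | 'P] == 1] by exists a.
apply: contraR ntH; rewrite negb_exists => /forallP ntC.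
have Ohm1_sub_stab a : 'Ohm_1(H) \subset 'C[a | 'P].
  set C := 'C_H[a | 'P]; have sCH : C \subset H := subsetIl _ _.
  have oC1 := Ohm1_cyclic_pgroup_prime (cyclicS sCH cycH) (pgroupS sCH pH) (ntC a).
  have -> : 'Ohm_1(H) = 'Ohm_1(C).
    by apply/esym/eqP; rewrite eqEcard OhmS // oC1 oH1 /=.
  exact: subset_trans (Ohm_sub 1 C) (subsetIr _ _).
rewrite -Ohm1_eq1 -subG1; apply/subsetP=> x Ox; rewrite inE.
by apply/eqP/permP=> a; rewrite perm1; apply/astab1P: (subsetP (Ohm1_sub_stab a) x Ox).
Qed.

Lemma cyclic_pgroup_two_closure (p : nat) (Omega : finType)
    (H : {group {perm Omega}}) :
  p.-group H -> cyclic H -> two_closure H = H.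
Proof.
move=> pH cycH; have [H1 | ntH] := eqsVneq H 1; first exact: two_closure_trivg.
have [a regHa] := cyclic_pgroup_regular_point pH cycH ntH.
exact: two_closure_regular_point regHa.
Qed.

Lemma rcosets_mulr (gT : finGroupType) (K G : {group gT}) (A : {set gT}) g :
  g \in G -> (A :* g \in rcosets K G) = (A \in rcosets K G).
Proof.
move=> Gg; apply/rcosetsP/rcosetsP => [[x Gx eA] | [x Gx ->]].
  exists (x * g^-1); first by rewrite groupM ?groupV.
  by rewrite rcosetM -eA rcosetK.
by exists (x * g); rewrite ?groupM // rcosetM.
Qed.

Lemma group_in_rcosets (gT : finGroupType) (K G : {group gT}) :
  (K : {set gT}) \in rcosets K G.
Proof. by rewrite -{1}(rcoset1 K) mem_rcosets -[1]mulg1 mem_mulg. Qed.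

Lemma group_notin_rcosets (gT : finGroupType) (K N G : {group gT}) :
  ~~ (K \subset N) -> (K : {set gT}) \notin rcosets N G.
Proof.
apply: contra => /rcosetsP[x _ defK].
have : 1 \in N :* x by rewrite -defK group1.
by rewrite mem_rcoset mul1g groupV => Nx; rewrite defK rcoset_id.
Qed.

Lemma rcoset_fixed (gT : finGroupType) (K : {group gT}) x : K :* x = K -> x \in K.
Proof. by move=> defK; rewrite -defK rcoset_refl. Qed.

Lemma rcoset_mulr_conjg (gT : finGroupType) (C : {group gT}) y k :
  k \in C :^ y -> C :* y :* k = C :* y.
Proof.
rewrite mem_conjg => Ck; rewrite -rcosetM conjgCV rcosetM.
by rewrite (@rcoset_id _ C (k ^ y^-1)).
Qed.

Section CosetRepresentation.

Variables (gT : finGroupType) (G E N K1 K2 : {group gT}).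

Definition coset_points : {set {set gT}} :=
  rcosets N G :|: rcosets K1 G :|: rcosets K2 G.

Definition coset_point := {A : {set gT} | A \in coset_points}.

Local Notation to := (('Rs^?)%act : action _ coset_point).
Local Notation H := (actperm to @* G).

Lemma sub_coset_action_dom : G \subset act_dom to.
Proof.
apply/subsetP=> g Gg; apply/astabsP => A; rewrite !inE /= rcosetE.
by rewrite !rcosets_mulr.
Qed.

Lemma coset_actE (A : coset_point) g : g \in G -> val (to A g) = val A :* g.
Proof. by move=> Gg; rewrite val_subact (subsetP sub_coset_action_dom) //= rcosetE. Qed.

Lemma coset_act_fixed (C : {group gT}) (A : coset_point) x :
  x \in G -> val A = C -> to A x = A -> x \in C.
Proof.
by move=> Gx defA /(congr1 val); rewrite coset_actE // defA; apply: rcoset_fixed.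
Qed.

Lemma in_coset_points : [/\ (N : {set gT}) \in coset_points,
  (K1 : {set gT}) \in coset_points & (K2 : {set gT}) \in coset_points].
Proof. by rewrite !inE !group_in_rcosets ?orbT. Qed.

Lemma coset_perm_isog : K1 :&: K2 = 1 -> H \isog G.
Proof.
move=> tiK12; have [_ SK1 SK2] := in_coset_points.
have sGD : G \subset 'dom (actperm to) := sub_coset_action_dom.
have injG : 'injm (restrm sGD (actperm to)).
  rewrite ker_restrm ker_actperm; apply/subsetP=> x /setIP[Gx cx].
  have fix_x (A : coset_point) : to A x = A := astab_act cx (in_setT A).
  have fixed (C : {group gT}) (SC : (C : {set gT}) \in coset_points) : x \in C :=
    coset_act_fixed (A := exist [in coset_points] _ SC) Gx (erefl _) (fix_x _).
  by rewrite -tiK12 inE (fixed _ SK1) (fixed _ SK2).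
have := sub_isog (subxx G) injG.
by rewrite morphim_restrm setIid isog_sym.
Qed.

Variable u : gT.

Hypotheses (nNG : N <| G) (nEG : E <| G) (Eu : u \in E).
Hypotheses (defE1 : N * K1 = E) (defE2 : N * K2 = E).

Let Gu : u \in G := subsetP (normal_sub nEG) u Eu.

Definition coset_twist (A : coset_point) :=
  if val A \in rcosets N G then to A u else A.

Lemma coset_twist_inj : injective coset_twist.
Proof.
move=> A B; rewrite /coset_twist.
case: ifP => NA; case: ifP => NB; first exact: act_inj; last by [].
  by move=> eAB; move: NB; rewrite -eAB coset_actE // rcosets_mulr // NA.
by move=> eAB; move: NA; rewrite eAB coset_actE // rcosets_mulr // NB.
Qed.

Definition twist_perm := perm coset_twist_inj.

Lemma coset_twist_pair (A B : coset_point) :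
    val A \in rcosets N G -> val B \notin rcosets N G ->
  exists2 x, x \in G & to A x = to A u /\ to B x = B.
Proof.
case/rcosetsP=> w Gw defA NB.
have [C [defE BC]] : exists C : {group gT}, N * C = E /\ val B \in rcosets C G.
  by have := valP B; rewrite !inE (negbTE NB) /= => /orP[]; [exists K1 | exists K2].
case/rcosetsP: BC => y Gy defB.
have defEy : N * C :^ y = E.
  rewrite -{1}(normsP (normal_norm nNG) y Gy) -conjsMg defE.
  exact: (normsP (normal_norm nEG)).
have := Eu; rewrite -defEy => /mulsgP[n k Nn Cyk defu].
have Gk : k \in G.
  by apply: (subsetP (normal_sub nEG)); rewrite -defEy (subsetP (mulG_subr _ _)).
exists k => //; split; apply: val_inj; rewrite !coset_actE // ?defA ?defB.
  by rewrite defu rcosetM [N :* w :* n]rcoset_mulr_conjg ?(normsP (normal_norm nNG)).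
exact: rcoset_mulr_conjg.
Qed.

Lemma twist_perm_in_two_closure : twist_perm \in two_closure H.
Proof.
have sGD : G \subset 'dom (actperm to) := sub_coset_action_dom.
have H_act x : x \in G -> actperm to x \in H.
  by move=> Gx; rewrite mem_morphim ?(subsetP sGD).
apply/two_closureP=> A B; rewrite !permE /coset_twist.
case NA: (val A \in rcosets N G); case NB: (val B \in rcosets N G).
- by exists (actperm to u); rewrite ?H_act ?actpermE.
- have [x Gx [eA eB]] := coset_twist_pair NA (negbT NB).
  by exists (actperm to x); rewrite ?H_act // !actpermE eA eB.
- have [x Gx [eB eA]] := coset_twist_pair NB (negbT NA).
  by exists (actperm to x); rewrite ?H_act // !actpermE eA eB.
- by exists 1; rewrite ?group1 ?perm1.
Qed.

Lemma twist_perm_notin :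
    ~~ (K1 \subset N) -> ~~ (K2 \subset N) -> K1 :&: K2 = 1 -> u \notin N ->
  twist_perm \notin H.
Proof.
move=> nK1N nK2N tiK12 nNu; have [SN SK1 SK2] := in_coset_points.
apply/morphimP=> [[x _ Gx eth]].
have fixed (C : {group gT}) (SC : (C : {set gT}) \in coset_points) :
    ~~ (C \subset N) -> x \in C.
  move=> nCN; apply: (coset_act_fixed (A := exist [in coset_points] _ SC) Gx (erefl _)).
  by rewrite -actpermE -eth permE /coset_twist /= (negbTE (group_notin_rcosets G nCN)).
have x1 : x = 1.
  by apply/set1P; rewrite -[[set 1]]/(1 : {set gT}) -tiK12 inE !fixed.
pose pN : coset_point := exist [in coset_points] _ SN.
have := congr1 (fun s : {perm coset_point} => val (s pN)) eth.
rewrite /= permE /coset_twist /= group_in_rcosets actpermE x1 act1 coset_actE //.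
by move/rcoset_fixed; apply/negP.
Qed.

End CosetRepresentation.

Lemma not_two_closed_of_complements (gT : finGroupType) (G E N K1 K2 : {group gT}) :
    N <| G -> E <| G -> N \proper E -> N * K1 = E -> N * K2 = E -> K1 :&: K2 = 1 ->
  ~ two_closed G.
Proof.
move=> nNG nEG ltNE defE1 defE2 tiK12 closedG.
have [_ [u Eu nNu]] := properP ltNE.
have notsubN (K : {group gT}) : N * K = E -> ~~ (K \subset N).
  move=> defE; apply: contra (proper_subn ltNE) => sKN.
  by rewrite -defE mul_subG.
apply/negP: (twist_perm_notin nEG Eu (notsubN _ defE1) (notsubN _ defE2) tiK12 nNu).
by rewrite -(closedG _ _ (coset_perm_isog G N tiK12)) (twist_perm_in_two_closure nNG).
Qed.

Lemma abelem_p2_complements (gT : finGroupType) (p : nat) (E N : {group gT}) :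
    prime p -> p.-abelem E -> #|E| = (p ^ 2)%N -> N \proper E -> #|N| = p ->
  exists K1 K2 : {group gT}, [/\ N * K1 = E, N * K2 = E & K1 :&: K2 = 1].
Proof.
move=> pr_p abE oE ltNE oN; have [sNE [a Ea nNa]] := properP ltNE.
have cyclic_compl x : x \in E -> x \notin N -> N * <[x]> = E /\ <[x]> :&: N = 1.
  move=> Ex nNx; have ntx : x != 1 by apply: contraNneq nNx => ->.
  have ox : #[x] = p := abelem_order_p abE Ex ntx.
  have tiX : <[x]> :&: N = 1 by apply: prime_TIg; rewrite ?cycle_subG // -orderE ox.
  split=> //; apply/eqP; rewrite eqEcard mul_subG ?cycle_subG //=.
  by rewrite TI_cardMg 1?setIC // oN -orderE ox oE (expnS p 1) expn1.
have [z Nz ntz] : exists2 z, z \in N & z != 1.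
  by apply/trivgPn; rewrite -cardG_gt1 oN prime_gt1.
have [Eaz nNaz] : a * z \in E /\ a * z \notin N.
  by split; [rewrite groupM // (subsetP sNE) | rewrite groupMr].
have [defE1 _] := cyclic_compl a Ea nNa.
have [defE2 tiN2] := cyclic_compl _ Eaz nNaz.
exists <[a]>%G, <[a * z]>%G; split=> //; apply: prime_TIg.
  by rewrite -orderE (abelem_order_p abE Ea) //; apply: contraNneq nNa => ->.
rewrite cycle_subG; apply: contra ntz => az_a.
have : z \in <[a * z]> :&: N by rewrite inE Nz -(groupMl _ az_a) cycle_id.
by rewrite tiN2 => /set1P->.
Qed.

Lemma odd_noncyclic_pgroup_normal_abelem (gT : finGroupType) (p : nat)
    (G : {group gT}) :
    odd p -> p.-group G -> ~~ cyclic G ->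
  exists E : {group gT}, [/\ E <| G, p.-abelem E & #|E| = (p ^ 2)%N].
Proof.
move=> odd_p pG ncycG.
have /forallPn[X] : ~~ [forall X : {group gT}, (X <| G) && abelian X ==> cyclic X].
  apply: contra ncycG => /forallP normal_cyclic.
  have hX (X : {group gT}) : X <| G -> abelian X -> cyclic X.
    by move=> nXG cXX; have := normal_cyclic X; rewrite nXG cXX.
  have [//|/and3P[/eqP p2 _ _]] := normal_rank1_structure pG hX.
  by rewrite p2 in odd_p.
rewrite negb_imply => /andP[/andP[nXG cXX] ncycX].
have pX := pgroupS (normal_sub nXG) pG.
have nOG : 'Ohm_1(X) <| G := char_normal_trans (Ohm_char 1 X) nXG.
have rankO : 2 <= logn p #|'Ohm_1(X)|.
  by rewrite -(p_rank_abelian p cXX) -(rank_pgroup pX) ltnNge -abelian_rank1_cyclic.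
have [E [sEO nEG oE]] := normal_pgroup pG nOG rankO.
by exists E; split=> //; apply: abelemS sEO (Ohm1_abelem pX cXX).
Qed.

Theorem mainTheorem12 (gT : finGroupType) (G : {group gT}) (p : nat) :
  prime p -> odd p -> (p.-group G)%g -> (two_closed G <-> cyclic G).
Proof.
move=> pr_p odd_p pG; split=> [closedG | cycG Omega H isoHG]; last first.
  apply: (cyclic_pgroup_two_closure (p := p)); last by rewrite (isog_cyclic isoHG).
  by rewrite /pgroup (card_isog isoHG).
apply: contraT => ncycG; exfalso.
have [E [nEG abE oE]] := odd_noncyclic_pgroup_normal_abelem odd_p pG ncycG.
have logE : 1 <= logn p #|E| by rewrite oE pfactorK.
have [N [sNE nNG oN]] := normal_pgroup pG nEG logE; rewrite expn1 in oN.
have ltNE : N \proper E.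
  by rewrite properEcard sNE oN oE -{1}(expn1 p) ltn_exp2l ?prime_gt1.
have [K1 [K2 [defE1 defE2 tiK12]]] := abelem_p2_complements pr_p abE oE ltNE oN.
exact: not_two_closed_of_complements nNG nEG ltNE defE1 defE2 tiK12 closedG.
Qed.
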